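(* There is a universal constant $c>0$ such that for all integers $n,d$ with $2\le d\le n/2$, the optimal MLSI constant $\alpha=\sup_{f>0\ \text{non-constant}}\frac{{\rm Ent}_{\pi_u}(f)}{\mathcal E_{\pi_u}(f,\log f)}$ of $(\Omega^B_n(d),\pi_u,Q_u)$ satisfies $\alpha\ge c\,nd$.
   Context: $\Omega^B_n(d)$ is the set of all simple bipartite $d$-regular graphs on $[n^{(\ell)}]\sqcup[n^{(r)}]$ with uniform distribution $\pi_u$. A simple switching of $G$ picks two edges $(i_1,j_1),(i_2,j_2)$ with $i_1\ne i_2$, $j_1\ne j_2$, deletes them and adds $(i_1,j_2),(i_2,j_1)$, provided the result is simple; $\mathcal N(G)$ is the set of graphs so obtainable. $Q_u(G_1,G_2)=(nd(nd-1)/2)^{-1}$ if $G_2\in\mathcal N(G_1)$, $Q_u(G_1,G_1)=-|\mathcal N(G_1)|/(nd(nd-1)/2)$, else $0$. ${\rm Ent}_\pi(f)=\mathbb E_\pi[f(\log f-\log\mathbb E_\pi f)]$, $\mathcal E_\pi(f,\log f)=\frac12\sum_{G,G'}\pi(G)Q(G,G')(f(G)-f(G'))\log\frac{f(G)}{f(G')}$. *)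

From HB Require Import structures.
From mathcomp Require Import all_boot all_order all_algebra.
From mathcomp Require Import all_classical all_reals all_analysis.
From mathcomp Require Import Rstruct.

Set Implicit Arguments.
Unset Strict Implicit.
Unset Printing Implicit Defensive.

Import Order.TTheory GRing.Theory Num.Theory.
Local Open Scope ring_scope.

(* A simple bipartite graph on [n^(l)] ⊔ [n^(r)] is its edge set E ⊆ [n]×[n]
   ((i,j) ∈ E means left vertex i is adjacent to right vertex j). *)
Definition deg_left (n : nat) (E : {set 'I_n * 'I_n}) (i : 'I_n) : nat :=
  #|[set j : 'I_n | (i, j) \in E]|.
Definition deg_right (n : nat) (E : {set 'I_n * 'I_n}) (j : 'I_n) : nat :=
  #|[set i : 'I_n | (i, j) \in E]|.
Definition is_dreg_bip (n d : nat) (E : {set 'I_n * 'I_n}) : bool :=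
  [forall i : 'I_n, deg_left E i == d] && [forall j : 'I_n, deg_right E j == d].

Definition OmegaB (n d : nat) := {E : {set 'I_n * 'I_n} | @is_dreg_bip n d E}.

Definition switch_rel (n d : nat) (G1 G2 : OmegaB n d) : bool :=
  [exists i1 : 'I_n, exists i2 : 'I_n, exists j1 : 'I_n, exists j2 : 'I_n,
    [&& i1 != i2, j1 != j2, (i1, j1) \in val G1, (i2, j2) \in val G1,
        (i1, j2) \notin val G1, (i2, j1) \notin val G1 &
        val G2 == ((val G1 :\ (i1, j1)) :\ (i2, j2)) :|: [set (i1, j2); (i2, j1)]]].

Definition nbhd (n d : nat) (G : OmegaB n d) : {set OmegaB n d} :=
  [set G' | switch_rel G G'].

Definition pi_u {R : realType} (n d : nat) (G : OmegaB n d) : R :=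
  1 / #|{: OmegaB n d}|%:R.

Definition Q_u {R : realType} (n d : nat) (G1 G2 : OmegaB n d) : R :=
  let N : R := ((n * d) * (n * d - 1))%:R / 2 in
  if G1 == G2 then - (#|nbhd G1|%:R) / N
  else if G2 \in nbhd G1 then 1 / N else 0.

Definition Exp_pi {R : realType} (n d : nat) (f : OmegaB n d -> R) : R :=
  \sum_(G : OmegaB n d) pi_u G * f G.

Definition Ent_pi {R : realType} (n d : nat) (f : OmegaB n d -> R) : R :=
  \sum_(G : OmegaB n d) pi_u G * (f G * (ln (f G) - ln (Exp_pi f))).

Definition Dir_pi {R : realType} (n d : nat) (f : OmegaB n d -> R) : R :=
  2^-1 * \sum_(G : OmegaB n d) \sum_(G' : OmegaB n d)
     pi_u G * Q_u G G' * (f G - f G') * (ln (f G) - ln (f G')).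

Definition pos_nonconst {R : realType} (n d : nat) : set (OmegaB n d -> R) :=
  [set f | (forall G, 0 < f G) /\ exists G1 G2, f G1 != f G2].

Definition alpha_MLSI {R : realType} (n d : nat) : \bar R :=
  ereal_sup [set ((Ent_pi f / Dir_pi f)%:E : \bar R) | f in @pos_nonconst R n d].

From HB Require Import structures.
From mathcomp Require Import all_boot all_order all_algebra.
From mathcomp Require Import all_classical all_reals all_analysis.
From mathcomp Require Import Rstruct ring lra zify.
Import Order.TTheory GRing.Theory Num.Theory.

Set Implicit Arguments.
Unset Strict Implicit.
Unset Printing Implicit Defensive.

(* Test the MLSI ratio on the function equal to b = e^-2 on a set A of graphs
   and to 1 elsewhere, where A is the set of graphs containing a fixed edge e or
   its complement, whichever has at most half of the mass.  A switching that
   deletes e is determined by its second deleted edge, and one that creates e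
   by a neighbour of each endpoint of e; so every graph has at most nd (resp.
   d^2 <= nd) neighbours across the boundary of A, and the number of boundary
   pairs is at most |A| nd.  The Dirichlet form is then O(|A| nd / (|Omega| (nd)^2))
   while the entropy is at least |A| / (20 |Omega|), giving the ratio nd/160.
   A circulant graph together with one switching shows that A is a proper,
   nonempty set. *)

Ltac case_bool_atoms := repeat match goal with
  | |- context[?x == ?y] => case: (x == y)
  | |- context[?x \in ?y] => case: (x \in y)
  end.

Section Switching.
Variable n : nat.
Implicit Types (E : {set 'I_n * 'I_n}) (i j : 'I_n).

Definition switch E (i1 i2 j1 j2 : 'I_n) :=
  ((E :\ (i1, j1)) :\ (i2, j2)) :|: [set (i1, j2); (i2, j1)].

Definition switchable E (i1 i2 j1 j2 : 'I_n) :=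
  [&& i1 != i2, j1 != j2, (i1, j1) \in E, (i2, j2) \in E,
      (i1, j2) \notin E & (i2, j1) \notin E].

Lemma switchC E i1 i2 j1 j2 : switch E i1 i2 j1 j2 = switch E i2 i1 j2 j1.
Proof. by apply/setP => x; rewrite !inE; case_bool_atoms. Qed.

Lemma cardsU1D1 (T : finType) (A : {set T}) x y :
  y \in A -> x \notin A -> #|x |: (A :\ y)| = #|A|.
Proof. by move=> yA xA; rewrite cardsU1 (cardsD1 y A) yA !inE (negbTE xA) andbF. Qed.

Lemma deg_left_switch E i1 i2 j1 j2 i :
  switchable E i1 i2 j1 j2 -> deg_left (switch E i1 i2 j1 j2) i = deg_left E i.
Proof.
case/and5P=> ne_i ne_j e11 e22 /andP[e12 e21]; rewrite /deg_left.
have ne12 := negbTE ne_i; have ne21 : (i2 == i1) = false by rewrite eq_sym.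
have [->|ne1] := eqVneq i i1.
  rewrite -(@cardsU1D1 _ [set j | (i1, j) \in E] j2 j1) ?inE //.
  by apply: eq_card => j; rewrite !inE !xpair_eqE eqxx ne12; case_bool_atoms.
have [->|ne2] := eqVneq i i2.
  rewrite -(@cardsU1D1 _ [set j | (i2, j) \in E] j1 j2) ?inE //.
  by apply: eq_card => j; rewrite !inE !xpair_eqE eqxx ne21; case_bool_atoms.
apply: eq_card => j; rewrite !inE !xpair_eqE (negbTE ne1) (negbTE ne2).
by case_bool_atoms.
Qed.

Lemma deg_right_switch E i1 i2 j1 j2 j :
  switchable E i1 i2 j1 j2 -> deg_right (switch E i1 i2 j1 j2) j = deg_right E j.
Proof.
case/and5P=> ne_i ne_j e11 e22 /andP[e12 e21]; rewrite /deg_right.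
have ne12 := negbTE ne_j; have ne21 : (j2 == j1) = false by rewrite eq_sym.
have [->|ne1] := eqVneq j j1.
  rewrite -(@cardsU1D1 _ [set i | (i, j1) \in E] i2 i1) ?inE //.
  by apply: eq_card => i; rewrite !inE !xpair_eqE eqxx ne12; case_bool_atoms.
have [->|ne2] := eqVneq j j2.
  rewrite -(@cardsU1D1 _ [set i | (i, j2) \in E] i1 i2) ?inE //.
  by apply: eq_card => i; rewrite !inE !xpair_eqE eqxx ne21; case_bool_atoms.
apply: eq_card => i; rewrite !inE !xpair_eqE (negbTE ne1) (negbTE ne2).
by case_bool_atoms.
Qed.

Lemma switch_dreg d E i1 i2 j1 j2 :
  switchable E i1 i2 j1 j2 -> is_dreg_bip d E -> is_dreg_bip d (switch E i1 i2 j1 j2).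
Proof.
move=> sw /andP[/forallP regl /forallP regr]; apply/andP; split; apply/forallP.
- by move=> i; rewrite deg_left_switch.
- by move=> j; rewrite deg_right_switch.
Qed.

Lemma switchableK E i1 i2 j1 j2 : switchable E i1 i2 j1 j2 ->
  switchable (switch E i1 i2 j1 j2) i1 i2 j2 j1 /\
  switch (switch E i1 i2 j1 j2) i1 i2 j2 j1 = E.
Proof.
case/and5P=> ne_i ne_j e11 e22 /andP[/negbTE e12 /negbTE e21].
have ni := negbTE ne_i; have ni' : (i2 == i1) = false by rewrite eq_sym.
have nj := negbTE ne_j; have nj' : (j2 == j1) = false by rewrite eq_sym.
split.
  by apply/and5P; split; rewrite ?inE ?xpair_eqE ?eqxx ?ni ?ni' ?nj ?nj' ?e11 ?e22 ?e12 ?e21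
    ?orbT.
have pairs_ne := (xpair_eqE, eqxx, ni, ni', nj, nj', andbF, andFb).
apply/setP => x; rewrite !inE.
have [->|_] := eqVneq x (i1, j1); first by rewrite !pairs_ne e11.
have [->|_] := eqVneq x (i2, j2); first by rewrite !pairs_ne e22.
have [->|_] := eqVneq x (i1, j2); first by rewrite !pairs_ne e12.
have [->|_] := eqVneq x (i2, j1); first by rewrite !pairs_ne e21.
by rewrite !orbF.
Qed.

End Switching.

Section SwitchingGraph.
Variables n d : nat.
Implicit Types G : OmegaB n d.

Lemma switch_relP G G' :
  reflect (exists i1 i2 j1 j2, switchable (val G) i1 i2 j1 j2 /\
                               val G' = switch (val G) i1 i2 j1 j2)
          (switch_rel G G').
Proof.
apply: (iffP existsP) => [[i1 /existsP[i2 /existsP[j1 /existsP[j2]]]] | [i1 [i2 [j1 [j2]]]]].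
  case/and5P=> ne_i ne_j e11 e22 /and3P[e12 e21 /eqP->].
  by exists i1, i2, j1, j2; split=> //; apply/and5P; split=> //; apply/andP.
case=> /and5P[ne_i ne_j e11 e22 /andP[e12 e21]] ->.
exists i1; apply/existsP; exists i2; apply/existsP; exists j1; apply/existsP; exists j2.
by apply/and5P; split=> //; apply/and3P.
Qed.

Lemma switch_rel_sym G G' : switch_rel G G' = switch_rel G' G.
Proof.
suff sym G1 G2 : switch_rel G1 G2 -> switch_rel G2 G1 by apply/idP/idP; apply: sym.
case/switch_relP=> i1 [i2 [j1 [j2 [sw E2]]]]; have [sw' E1] := switchableK sw.
by apply/switch_relP; exists i1, i2, j2, j1; rewrite E2 E1.
Qed.

Lemma card_edges G : #|val G| = (n * d)%N.
Proof.
case: G => E /= /andP[/forallP regl _].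
transitivity (\sum_(i : 'I_n) \sum_(j | (i, j) \in E) 1)%N.
  by rewrite pair_big_dep /= -sum1_card; apply: eq_bigl => -[i j].
rewrite (eq_bigr (fun _ => d)) ?sum_nat_const ?card_ord // => i _.
by rewrite sum1dep_card -(eqP (regl i)) /deg_left cardsE.
Qed.

Lemma card_switch_removing G e : e \in val G ->
  (#|[set G' : OmegaB n d | (e \notin val G') && switch_rel G G']| <= n * d)%N.
Proof.
case: e => a b abG; rewrite -(card_edges G) -(card_imset _ val_inj).
apply: leq_trans (leq_imset_card (fun e => switch (val G) a e.1 b e.2) (val G)).
apply/subset_leq_card/fintype.subsetP => _ /imsetP[G' + ->].
rewrite inE => /andP[abG' /switch_relP[i1 [i2 [j1 [j2 [sw eG']]]]]].
rewrite eG' in abG' *.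
have /and5P[_ _ e11 e22 _] := sw.
have : ((a, b) == (i1, j1)) || ((a, b) == (i2, j2)).
  by move: abG'; rewrite /switch !inE abG andbT; case_bool_atoms.
case/orP=> /eqP[-> ->]; apply/imsetP.
- by exists (i2, j2).
- by exists (i1, j1); rewrite // switchC.
Qed.

Lemma card_switch_creating G e : e \notin val G ->
  (#|[set G' : OmegaB n d | (e \in val G') && switch_rel G G']| <= d * d)%N.
Proof.
have /andP[/forallP regl /forallP regr] := valP G.
case: e => a b abG; rewrite -(card_imset _ val_inj).
have -> : (d * d = #|finset.setX [set j | (a, j) \in val G] [set i | (i, b) \in val G]|)%N.
  by rewrite cardsX; congr (_ * _)%N; apply/esym/eqP; [exact: regl | exact: regr].
apply: leq_trans (leq_imset_card (fun e => switch (val G) a e.2 e.1 b) _).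
apply/subset_leq_card/fintype.subsetP => _ /imsetP[G' + ->].
rewrite inE => /andP[abG' /switch_relP[i1 [i2 [j1 [j2 [sw eG']]]]]].
rewrite eG' in abG' *.
have /and5P[_ _ e11 e22 _] := sw.
have : ((a, b) == (i1, j2)) || ((a, b) == (i2, j1)).
  by move: abG'; rewrite /switch !inE (negbTE abG) andbF; case_bool_atoms.
case/orP=> /eqP[-> ->]; apply/imsetP.
- by exists (j1, i2); rewrite ?inE /= ?e11 ?e22.
- by exists (j2, i1); rewrite ?inE /= ?e11 ?e22 // switchC.
Qed.

End SwitchingGraph.

Lemma sum_nat_pred_card (T : finType) (P : pred T) :
  (\sum_(x : T) P x = #|[set x | P x]|)%N.
Proof. by rewrite -sum1dep_card [RHS]big_mkcond. Qed.

Section EdgeBoundary.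
Variables n d : nat.
Implicit Types A : {set OmegaB n d}.

Definition edge_boundary A : nat :=
  \sum_(G : OmegaB n d) \sum_(G' : OmegaB n d)
     ((G \in A) && (G' \notin A) && switch_rel G G').

Lemma edge_boundaryC A : edge_boundary (~: A) = edge_boundary A.
Proof.
rewrite /edge_boundary [RHS]exchange_big /=; apply: eq_bigr => G _; apply: eq_bigr => G' _.
by rewrite !inE negbK switch_rel_sym; case: (G \in A); case: (G' \in A).
Qed.

Lemma edge_boundary_le A K :
  (forall G, G \in A -> #|[set G' | (G' \notin A) && switch_rel G G']| <= K)%N ->
  (edge_boundary A <= #|A| * K)%N.
Proof.
move=> leK; rewrite /edge_boundary -sum_nat_const (bigID (mem A)) /=.
rewrite [X in (_ + X)%N]big1 ?addn0 => [|G /negbTE GA]; last first.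
  by rewrite big1 // => G' _; rewrite GA.
apply: leq_sum => G GA; apply: leq_trans (leK G GA).
by rewrite -sum_nat_pred_card; apply: leq_sum => G' _; rewrite GA.
Qed.

Lemma edge_boundary_gt0 A G0 G1 :
  G0 \in A -> G1 \notin A -> switch_rel G0 G1 -> (0 < edge_boundary A)%N.
Proof.
move=> G0A G1A sw; rewrite /edge_boundary (bigD1 G0) //=; apply: leq_trans (leq_addr _ _).
by rewrite (bigD1 G1) //= G0A G1A sw.
Qed.

Definition graphs_with_edge (e : 'I_n * 'I_n) : {set OmegaB n d} :=
  [set G : OmegaB n d | e \in val G].

Lemma edge_boundary_graphs_with_edge e :
  (edge_boundary (graphs_with_edge e) <= #|graphs_with_edge e| * (n * d))%N.
Proof.
apply: edge_boundary_le => G; rewrite inE => eG.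
apply: leq_trans (card_switch_removing eG).
by apply/subset_leq_card/fintype.subsetP => G'; rewrite !inE.
Qed.

Lemma edge_boundary_graphs_without_edge e :
  (edge_boundary (~: graphs_with_edge e) <= #|~: graphs_with_edge e| * (d * d))%N.
Proof.
apply: edge_boundary_le => G; rewrite !inE => eG.
apply: leq_trans (card_switch_creating eG).
by apply/subset_leq_card/fintype.subsetP => G'; rewrite !inE negbK.
Qed.

End EdgeBoundary.

Section Circulant.
Variables m d : nat.
Local Notation N := m.+2.
Local Open Scope ring_scope.

Definition circulant : {set 'I_N * 'I_N} :=
  [set e : 'I_N * 'I_N | (val (e.2 - e.1)%R < d)%N].

Lemma card_ord_lt k : (d <= k)%N -> #|[set i : 'I_k | (val i < d)%N]| = d.
Proof.
move=> le_dk; have widen_inj : injective (widen_ord le_dk).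
  by move=> i j e; apply: val_inj; exact: (congr1 val e).
rewrite -[RHS]card_ord -(card_imset _ widen_inj).
apply: eq_card => i; rewrite !inE; apply/idP/imsetP => [lt_id | [j _ ->]]; last exact: (ltn_ord j).
by exists (Ordinal lt_id); last exact: val_inj.
Qed.

Lemma circulant_dreg : (d <= N)%N -> is_dreg_bip d circulant.
Proof.
move=> le_dN; apply/andP; split; apply/forallP => i; rewrite -[X in _ == X](card_ord_lt le_dN).
- rewrite -(card_preimset _ (addIr (- i))).
  by apply/eqP/eq_card => j; rewrite !inE.
- have inj_sub : injective (fun j : 'I_N => i - j) by move=> j k /addrI/oppr_inj.
  by rewrite -(card_preimset _ inj_sub); apply/eqP/eq_card => j; rewrite !inE.
Qed.

Lemma in_circulant (i j : 'I_N) : ((i, j) \in circulant) = (val (j - i)%R < d)%N.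
Proof. by rewrite inE. Qed.

Lemma circulant_switchable : (2 <= d)%N -> (2 * d <= N)%N ->
  switchable circulant 0 1 0 d%:R.
Proof.
move=> d_ge2 le_2dN; have lt_dN : (d < N)%N by lia.
have val_d : val (d%:R : 'I_N) = d by rewrite Zp_nat /= modn_small.
have val_d1 : val (d%:R - 1 : 'I_N) = d.-1.
  by rewrite -[1 : 'I_N]/(1%:R) -natrB ?Zp_nat /= ?modn_small; lia.
have val_N1 : val (- 1 : 'I_N) = m.+1 by rewrite /= modn_small.
apply/and5P; split; rewrite ?in_circulant ?subrr ?subr0 ?sub0r ?val_d ?val_d1 ?val_N1 ?ltnn.
- by rewrite eq_sym oner_eq0.
- by apply/eqP => /(congr1 val); rewrite val_d /=; lia.
- by rewrite /=; lia.
- lia.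
- lia.
Qed.

End Circulant.

Lemma exists_switch_removing_edge n d : (2 <= d)%N -> (2 * d <= n)%N ->
  exists e (G0 G1 : OmegaB n d), [/\ e \in val G0, e \notin val G1 & switch_rel G0 G1].
Proof.
case: n => [|[|m]] d_ge2 le_2dn; try lia.
have sw := circulant_switchable d_ge2 le_2dn.
have reg0 : is_dreg_bip d (circulant m d) by apply: circulant_dreg; lia.
have /and5P[ne_i ne_j e00 _ _] := sw.
exists (0, 0)%R, (exist (is_dreg_bip d) _ reg0).
exists (exist (is_dreg_bip d) _ (switch_dreg sw reg0)); split=> //=.
- by rewrite !inE !xpair_eqE eqxx (negbTE ne_i) /= (negbTE ne_j).
- by apply/switch_relP; exists 0%R, 1%R, 0%R, d%:R%R.
Qed.

Local Open Scope ring_scope.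

Lemma sumr_if_mem (R : realType) (T : finType) (A : {set T}) (u v : R) :
  \sum_(x : T) (if x \in A then u else v) = #|A|%:R * u + #|~: A|%:R * v.
Proof.
rewrite (bigID (mem A)) /= (eq_bigr (fun _ => u)); last by move=> x ->.
rewrite [X in _ + X](eq_bigr (fun _ => v)); last by move=> x /negbTE ->.
rewrite [X in _ + X](eq_bigl (mem (~: A))); last by move=> x; rewrite !inE.
by rewrite !sumr_const !mulr_natl.
Qed.

Definition two_valued (R : realType) n d (A : {set OmegaB n d}) (b : R)
  (G : OmegaB n d) : R :=
  if G \in A then b else 1.

Section TwoValuedTestFunction.
Variables (R : realType) (n d : nat) (A : {set OmegaB n d}) (b : R).
Hypotheses (b_gt0 : 0 < b) (b_lt1 : b < 1).
Hypothesis Omega_gt0 : (0 < #|{: OmegaB n d}|)%N.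

Let f := two_valued A b.
Let M : R := #|{: OmegaB n d}|%:R.
Let r : R := #|A|%:R / M.

Lemma mass_setC : #|~: A|%:R / M = 1 - r.
Proof.
rewrite /r /M -(cardsC A) natrD; field.
by rewrite -natrD cardsC pnatr_eq0 -lt0n.
Qed.

Lemma Exp_two_valued : Exp_pi f = r * b + (1 - r).
Proof.
rewrite /Exp_pi (eq_bigr (fun G => M^-1 * f G)) => [|G _]; last by rewrite /pi_u div1r.
by rewrite -mulr_sumr /f /two_valued sumr_if_mem mulr1 -mass_setC /r; ring.
Qed.

Lemma Ent_two_valued :
  Ent_pi f = r * (b * (ln b - ln (Exp_pi f))) + (1 - r) * (- ln (Exp_pi f)).
Proof.
rewrite /Ent_pi (eq_bigr (fun G => M^-1 *
    (if G \in A then b * (ln b - ln (Exp_pi f)) else - ln (Exp_pi f)))).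
  by rewrite -mulr_sumr sumr_if_mem -mass_setC /r; ring.
move=> G _; rewrite /pi_u div1r /f /two_valued; case: (G \in A) => //.
by rewrite ln1 mul1r sub0r.
Qed.

Let N : R := ((n * d) * (n * d - 1))%:R / 2.

Lemma Dir_two_valued_term G G' :
  pi_u G * Q_u G G' * (f G - f G') * (ln (f G) - ln (f G')) =
  (1 - b) * (- ln b) / M / N *
  (((G \in A) && (G' \notin A) && switch_rel G G') +
   ((G \in ~: A) && (G' \notin ~: A) && switch_rel G G'))%:R.
Proof.
rewrite /Q_u /pi_u /f /two_valued -/N -/M; case: eqVneq => [<-|ne].
  by rewrite subrr mulr0 mul0r !inE; case: (G \in A); rewrite /= ?mulr0.
rewrite /nbhd !inE.
by case: switch_rel; case: (G \in A); case: (G' \in A);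
  rewrite /= ?ln1 ?mulr0 ?mul0r ?subrr //; ring.
Qed.

Lemma Dir_two_valued :
  Dir_pi f = (1 - b) * (- ln b) / M / N * (edge_boundary A)%:R.
Proof.
rewrite /Dir_pi (eq_bigr (fun G => \sum_(G' : OmegaB n d) (1 - b) * (- ln b) / M / N *
  (((G \in A) && (G' \notin A) && switch_rel G G') +
   ((G \in ~: A) && (G' \notin ~: A) && switch_rel G G'))%:R)) => [|G _].
  under eq_bigr do rewrite -mulr_sumr -natr_sum.
  rewrite -mulr_sumr -natr_sum.
  have -> : (\sum_(G : OmegaB n d) \sum_(G' : OmegaB n d)
      (((G \in A) && (G' \notin A) && switch_rel G G') +
       ((G \in ~: A) && (G' \notin ~: A) && switch_rel G G'))
      = edge_boundary A + edge_boundary (~: A))%N.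
    by rewrite /edge_boundary -big_split; apply: eq_bigr => G _; rewrite -big_split.
  rewrite edge_boundaryC natrD.
  by set c := _ / M / N; set k := (edge_boundary A)%:R; field.
by apply: eq_bigr => G' _; exact: Dir_two_valued_term.
Qed.

Hypothesis nd_ge2 : (2 <= n * d)%N.

Lemma Dir_two_valued_gt0 : (0 < edge_boundary A)%N -> 0 < Dir_pi f.
Proof.
move=> bd_gt0; have M_gt0 : 0 < M by rewrite ltr0n.
have N_gt0 : 0 < N by rewrite divr_gt0 // ltr0n muln_gt0 subn_gt0 (leq_trans _ nd_ge2).
have ln_b_lt0 : ln b < 0 by rewrite ln_lt0 ?b_gt0.
rewrite Dir_two_valued; apply: mulr_gt0; last by rewrite ltr0n.
by apply: divr_gt0 => //; apply: divr_gt0 => //; rewrite mulr_gt0 ?subr_gt0 ?oppr_gt0.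
Qed.

Lemma Dir_two_valued_le : (edge_boundary A <= #|A| * (n * d))%N ->
  Dir_pi f * ((n * d)%:R - 1) <= 2 * ((1 - b) * - ln b) * r.
Proof.
move=> bd_le; have M_gt0 : 0 < M by rewrite ltr0n.
have K_gt1 : 1 < (n * d)%:R :> R by rewrite ltr1n.
have u_ge0 : 0 <= (1 - b) * (- ln b) by rewrite mulr_ge0 ?subr_ge0 ?oppr_ge0 ?ln_le0 ?ltW.
have c_le : (edge_boundary A)%:R <= #|A|%:R * (n * d)%:R :> R by rewrite -natrM ler_nat.
rewrite Dir_two_valued /N /r (@natrM R (n * d)) natrB ?(leq_trans _ nd_ge2) //.
(* Generalized so that [field] does not unfold the casts. *)
move: ((1 - b) * - ln b) (n * d)%:R (edge_boundary A)%:R u_ge0 K_gt1 c_le.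
move=> u K c u_ge0 K_gt1 c_le.
have -> : u / M / (K * (K - 1%:R) / 2) * c * (K - 1) = 2 * u * (c / K / M).
  by field; rewrite !gt_eqF ?subr_gt0 // (lt_trans ltr01).
by rewrite ler_wpM2l ?mulr_ge0 // ler_pM2r ?invr_gt0 // ler_pdivrMr // (lt_trans ltr01).
Qed.

End TwoValuedTestFunction.

Lemma expRN2_le (R : realType) : expR (-2) <= 1/5 :> R.
Proof.
have e2_ge : (3/2) ^+ 4 <= expR 2 :> R.
  have -> : expR 2 = expR (1/2) ^+ 4 :> R by rewrite -expRM_natl; congr expR; field.
  rewrite lerXn2r ?nnegrE ?expR_ge0 //.
  by apply: le_trans (expR_ge1Dx _); lra.
rewrite expRN -[X in _ <= X]invrK lef_pV2 ?posrE ?expR_gt0 //; lra.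
Qed.

Lemma two_valued_entropy_ge (R : realType) (b r : R) :
  b = expR (-2) -> 0 < r -> r <= 1/2 ->
  r / 20 <= r * (b * (ln b - ln (r * b + (1 - r)))) + (1 - r) * (- ln (r * b + (1 - r))).
Proof.
move=> b_def r_gt0 r_le; set m := r * b + (1 - r).
have b_gt0 : 0 < b by rewrite b_def expR_gt0.
have b_le : b <= 1/5 by rewrite b_def expRN2_le.
have ln_m_le : ln m <= - r * (1 - b).
  by rewrite -[m in ln m](subrKC 1) (le_trans (le_ln1Dx _)) /m; nra.
have mr_le : m * (r * (1 - b)) <= m * (- ln m).
  by apply: ler_wpM2l; [rewrite /m; nra | lra].
have key : 1 / 20 <= -2 * b + m * (1 - b) by rewrite /m; nra.
have -> : ln b = -2 by rewrite b_def expRK.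
have -> : r * (b * (-2 - ln m)) + (1 - r) * (- ln m) = -2 * r * b + m * (- ln m).
  by rewrite /m; ring.
have := ler_wpM2l (ltW r_gt0) key; lra.
Qed.

Lemma ratio_ge_of_bounds (R : realType) (K r D E : R) : 2 <= K -> 0 < r -> 0 < D ->
  D * (K - 1) <= 4 * r -> r / 20 <= E -> K / 160 <= E / D.
Proof.
move=> K_ge2 r_gt0 D_gt0 D_le E_ge; rewrite ler_pdivlMr //.
have DK_ge0 : 0 <= D * (K - 2) by rewrite mulr_ge0 //; lra.
lra.
Qed.

Lemma alpha_MLSI_ge_of_boundary (R : realType) n d (A : {set OmegaB n d}) G0 G1 :
  (2 <= n * d)%N -> G0 \in A -> G1 \notin A -> (2 * #|A| <= #|{: OmegaB n d}|)%N ->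
  (0 < edge_boundary A <= #|A| * (n * d))%N ->
  ((160^-1 * (n * d)%:R : R)%:E <= alpha_MLSI n d)%E.
Proof.
move=> nd_ge2 G0A G1A le_2A /andP[bd_gt0 bd_le].
have Omega_gt0 : (0 < #|{: OmegaB n d}|)%N by apply/card_gt0P; exists G0.
pose b : R := expR (-2); pose f := two_valued A b.
set M : R := #|{: OmegaB n d}|%:R; set r : R := #|A|%:R / M.
have b_gt0 : 0 < b by rewrite expR_gt0.
have b_lt1 : b < 1 by rewrite expR_lt1; lra.
have r_gt0 : 0 < r by rewrite divr_gt0 ?ltr0n //; apply/card_gt0P; exists G0.
have r_le : r <= 1/2.
  have : 2 * #|A|%:R <= M by rewrite -natrM ler_nat.
  by rewrite /r ler_pdivrMr ?ltr0n //; lra.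
have f_adm : @pos_nonconst R n d f.
  split=> [G|]; first by rewrite /f /two_valued; case: (G \in A) => //; lra.
  by exists G0, G1; rewrite /f /two_valued G0A (negbTE G1A) lt_eqF.
apply: le_trans (ereal_sup_ubound _); last by exists f.
rewrite lee_fin mulrC; apply: (ratio_ge_of_bounds _ r_gt0).
- by rewrite ler_nat.
- exact: Dir_two_valued_gt0.
- have := Dir_two_valued_le b_lt1 Omega_gt0 nd_ge2 bd_le.
  by move/le_trans; apply; rewrite expRK -/M -/r; nra.
- by rewrite /f Ent_two_valued // Exp_two_valued //; exact: two_valued_entropy_ge.
Qed.

Theorem mainTheorem5 :
  exists c : Rdefinitions.R, 0 < c /\
    forall n d : nat, (2 <= d)%N -> (2 * d <= n)%N ->
      ((c * (n * d)%:R)%:E <= @alpha_MLSI Rdefinitions.R n d)%E.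
Proof.
exists 160^-1; split=> [|n d d_ge2 le_2dn]; first by rewrite invr_gt0 ltr0n.
have nd_ge2 : (2 <= n * d)%N by nia.
have [e [G0 [G1 [eG0 eG1 sw]]]] := exists_switch_removing_edge d_ge2 le_2dn.
set A := graphs_with_edge d e.
have G0A : G0 \in A by rewrite inE.
have G1A : G1 \notin A by rewrite inE.
have bd_gt0 := edge_boundary_gt0 G0A G1A sw.
have [le_2A | lt_A] := leqP (2 * #|A|) #|{: OmegaB n d}|.
  apply: alpha_MLSI_ge_of_boundary G0A G1A le_2A _ => //.
  by rewrite bd_gt0 edge_boundary_graphs_with_edge.
apply: (@alpha_MLSI_ge_of_boundary _ n d (~: A) G1 G0 nd_ge2).
- by rewrite inE G1A.
- by rewrite inE negbK G0A.
- by rewrite -(cardsC A) in lt_A *; lia.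
- rewrite edge_boundaryC bd_gt0 /= -edge_boundaryC.
  by apply: leq_trans (edge_boundary_graphs_without_edge d e) _; rewrite leq_mul2l leq_mul2r; lia.
Qed.
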